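(* Fix $\gamma\in(0,1)$. For $n\ge1$ define $\rho_n\colon\mathbb{R}\to\{-1,0,1\}$ by $\rho_n(x)=0$ if $x\in[j4^{-n},(j+1)4^{-n})$ with $j\equiv0,3\pmod 4$, $\rho_n(x)=1$ if $j\equiv1\pmod4$, and $\rho_n(x)=-1$ if $j\equiv2\pmod4$ ($j\in\mathbb{Z}$). Let $v_n(x)=\prod_{k=1}^n(1+\gamma\rho_{2k-1}(x))$ and $v_m^*(x)=\max(v_1(x),\dots,v_m(x))$. Then there exists a constant $c>0$ (depending on $\gamma$) such that \[\int_0^1 v_m^*(x)\,dx\ge cm\qquad\text{for all }m=1,2,\dots\] *)

From Stdlib Require Import Reals ZArith.
Open Scope R_scope.

(* floor x : the unique integer j with j <= x < j + 1 (via Stdlib's [up]). *)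
Definition Zfloor (x : R) : Z := (up x - 1)%Z.

Definition rho (n : nat) (x : R) : R :=
  match Z.modulo (Zfloor (x * 4 ^ n)) 4 with
  | 1%Z => 1
  | 2%Z => -1
  | _ => 0
  end.

Fixpoint v (gamma : R) (n : nat) (x : R) : R :=
  match n with
  | O => 1
  | S k => v gamma k x * (1 + gamma * rho (2 * S k - 1) x)
  end.

(* v*_m(x) = max(v_1(x), ..., v_m(x)) for m >= 1 (value at m = 0 is unused). *)
Fixpoint vstar (gamma : R) (m : nat) (x : R) : R :=
  match m with
  | O => 0
  | S O => v gamma 1 x
  | S k => Rmax (vstar gamma k x) (v gamma m x)
  end.

From Stdlib Require Import Reals ZArith Lra Lia.
From Coquelicot Require Import Coquelicot.
Open Scope R_scope.

(* Self-similarity.  rho_{n+2}(x) = rho_n(16x - q) for n >= 1 and every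
   integer q, hence on the sixteenth [p/16, (p+1)/16] with p = 4d + r
   (r < 4) the maximal function satisfies
       v*_{m+1}(x) = c_d * max(1, v*_m(16x - p)),   c_d = 1 + gamma rho_1,
   where c_0 = c_3 = 1, c_1 = 1 + gamma, c_2 = 1 - gamma.  Writing I_m(t) = int_0^1 max(t, v*_m), rescaling the sixteen
   pieces gives
       4 I_{m+1}(t) = sum_{d<4} c_d I_m(max(t/c_d, 1)).  With alpha = (gamma + (1-gamma) ln(1-gamma))/4 > 0 we prove
   I_m(s) >= s - ln s + alpha m for all s >= 1; the inductive step is a pure
   inequality about u |-> u - ln u (lemma [recursion_gain]), resting on
   ln u >= 1 - 1/u.  Finally int_0^1 v*_{m+1} = I_m(1) >= 1 + alpha m, so
   c = min(1, alpha) works. *)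

Lemma Zfloor_bounds x : IZR (Zfloor x) <= x < IZR (Zfloor x) + 1.
Proof. unfold Zfloor. rewrite minus_IZR. destruct (archimed x). simpl. lra. Qed.

Lemma Zfloor_spec x z : IZR z <= x < IZR z + 1 -> Zfloor x = z.
Proof.
  intros [H1 H2]. unfold Zfloor.
  rewrite <- (tech_up x (z + 1)); [ring | rewrite plus_IZR; simpl; lra
                                        | rewrite plus_IZR; simpl; lra].
Qed.

Lemma Zfloor_add_int x k : Zfloor (x + IZR k) = (Zfloor x + k)%Z.
Proof. apply Zfloor_spec. rewrite plus_IZR. destruct (Zfloor_bounds x). lra. Qed.

Definition digit_val (j : Z) : R :=
  match Z.modulo j 4 with 1%Z => 1 | 2%Z => -1 | _ => 0 end.

Lemma rho_digit_val n x : rho n x = digit_val (Zfloor (x * 4 ^ n)).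
Proof. reflexivity. Qed.

Lemma digit_val_cases j : digit_val j = 1 \/ digit_val j = -1 \/ digit_val j = 0.
Proof.
  unfold digit_val. destruct (j mod 4)%Z as [|p|p]; auto.
  destruct p as [p|p|]; auto. destruct p; auto.
Qed.

Lemma digit_val_shift j q n : digit_val (j + q * 4 ^ Z.of_nat (S n)) = digit_val j.
Proof.
  unfold digit_val. rewrite Nat2Z.inj_succ, Z.pow_succ_r by lia.
  replace (q * (4 * 4 ^ Z.of_nat n))%Z with ((q * 4 ^ Z.of_nat n) * 4)%Z by ring.
  now rewrite Z.mod_add by lia.
Qed.

Lemma rho_self_similar n x q : (1 <= n)%nat -> rho (n + 2) x = rho n (16 * x - IZR q).
Proof.
  intros Hn. rewrite !rho_digit_val. destruct n as [|n]; [lia|].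
  replace ((16 * x - IZR q) * 4 ^ S n)
    with (x * 4 ^ (S n + 2) + IZR (- q * 4 ^ Z.of_nat (S n))).
  - now rewrite Zfloor_add_int, digit_val_shift.
  - rewrite mult_IZR, <- pow_IZR, opp_IZR, pow_add. simpl. ring.
Qed.

Lemma rho1_on_sixteenth d r x : (r < 4)%nat ->
  INR (4 * d + r) / 16 < x < (INR (4 * d + r) + 1) / 16 ->
  rho 1 x = digit_val (Z.of_nat d).
Proof.
  intros Hr Hx. rewrite rho_digit_val. f_equal. apply Zfloor_spec.
  rewrite <- INR_IZR_INZ. rewrite plus_INR, mult_INR in Hx.
  assert (INR r <= 3) by (replace 3 with (INR 3) by (simpl; ring); apply le_INR; lia).
  assert (0 <= INR r) by apply pos_INR. simpl in *. lra.
Qed.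

Section Products.
Variable gamma : R.

Lemma v_self_similar k x q :
  v gamma (S k) x = (1 + gamma * rho 1 x) * v gamma k (16 * x - IZR q).
Proof.
  induction k as [|k IHk]; [simpl; ring|].
  change (v gamma (S (S k)) x)
    with (v gamma (S k) x * (1 + gamma * rho (2 * S (S k) - 1) x)).
  change (v gamma (S k) (16 * x - IZR q)) with
    (v gamma k (16 * x - IZR q) * (1 + gamma * rho (2 * S k - 1) (16 * x - IZR q))).
  replace (2 * S (S k) - 1)%nat with ((2 * S k - 1) + 2)%nat by lia.
  rewrite IHk, (rho_self_similar _ x q) by lia. ring.
Qed.

Hypothesis hg : 0 < gamma < 1.

Lemma factor_pos n x : 0 < 1 + gamma * rho n x.
Proof.
  rewrite rho_digit_val.
  destruct (digit_val_cases (Zfloor (x * 4 ^ n))) as [H|[H|H]]; rewrite H; lra.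
Qed.

Lemma v_pos k x : 0 < v gamma k x.
Proof. induction k; simpl; [lra|]. apply Rmult_lt_0_compat; auto using factor_pos. Qed.

Lemma vstar_nonneg m x : 0 <= vstar gamma m x.
Proof.
  induction m as [|[|m] IHm]; [simpl; lra | left; apply (v_pos 1) |].
  change (vstar gamma (S (S m)) x) with (Rmax (vstar gamma (S m) x) (v gamma (S (S m)) x)).
  eapply Rle_trans; [apply IHm | apply Rmax_l].
Qed.

(* v*_{m+1}(x) = (1 + gamma rho_1(x)) max(1, v*_m(16 x - q)); for m = 0 the
   convention v*_0 = 0 makes the right-hand side equal to v_1. *)
Lemma vstar_self_similar m x q :
  vstar gamma (S m) x = (1 + gamma * rho 1 x) * Rmax 1 (vstar gamma m (16 * x - IZR q)).
Proof.
  induction m as [|m IHm]; [simpl; rewrite Rmax_left by lra; ring|].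
  change (vstar gamma (S (S m)) x) with (Rmax (vstar gamma (S m) x) (v gamma (S (S m)) x)).
  rewrite IHm, (v_self_similar _ x q), RmaxRmult by (left; apply factor_pos).
  f_equal. destruct m as [|m].
  - simpl vstar at 1. now rewrite (Rmax_left 1 0) by lra.
  - change (vstar gamma (S (S m)) (16 * x - IZR q)) with
      (Rmax (vstar gamma (S m) (16 * x - IZR q)) (v gamma (S (S m)) (16 * x - IZR q))).
    symmetry; apply Rmax_assoc.
Qed.
End Products.

Lemma RInt_affine_piece (g G : R -> R) (c N p : R) : 0 < N ->
  ex_RInt G 0 1 ->
  (forall x, p / N < x < (p + 1) / N -> g x = c * G (N * x - p)) ->
  ex_RInt g (p / N) ((p + 1) / N) /\
  RInt g (p / N) ((p + 1) / N) = c / N * RInt G 0 1.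
Proof.
  intros HN.
  assert (Hlo : N * (p / N) + - p = 0) by (field; lra).
  assert (Hhi : N * ((p + 1) / N) + - p = 1) by (field; lra).
  assert (Hle : p / N <= (p + 1) / N)
    by (apply Rmult_le_compat_r; [left; apply Rinv_0_lt_compat|]; lra).
  assert (Hscal : forall x, c * G (N * x - p) = scal (c / N) (scal N (G (N * x + - p)))).
  { intros x. unfold scal; simpl; unfold mult; simpl. unfold Rminus. field. lra. }
  intros HG Hg.
  set (G' := fun y => scal N (G (N * y + - p))).
  assert (HG' : ex_RInt G' (p / N) ((p + 1) / N)).
  { apply (ex_RInt_comp_lin G N (- p)). rewrite Hlo, Hhi. exact HG. }
  assert (Hext : forall x, Rmin (p / N) ((p + 1) / N) < x < Rmax (p / N) ((p + 1) / N) ->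
                   scal (c / N) (G' x) = g x).
  { intros x Hx. rewrite Rmin_left, Rmax_right in Hx by exact Hle.
    rewrite Hg, Hscal by exact Hx. reflexivity. }
  split.
  - apply (ex_RInt_ext (fun x => scal (c / N) (G' x)) g _ _ Hext).
    exact (ex_RInt_scal G' _ _ (c / N) HG').
  - rewrite <- (RInt_ext (fun x => scal (c / N) (G' x)) g _ _ Hext).
    transitivity (scal (c / N) (RInt G' (p / N) ((p + 1) / N))).
    { exact (RInt_scal G' _ _ (c / N) HG'). }
    unfold G'. rewrite (RInt_comp_lin G N (- p)), Hlo, Hhi; [reflexivity|].
    rewrite Hlo, Hhi. exact HG.
Qed.

Lemma RInt_sum_pieces (f : R -> R) (N : R) (n : nat) :
  (forall p, (p <= n)%nat -> ex_RInt f (INR p / N) ((INR p + 1) / N)) ->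
  ex_RInt f 0 ((INR n + 1) / N) /\
  RInt f 0 ((INR n + 1) / N) = sum_n (fun p => RInt f (INR p / N) ((INR p + 1) / N)) n.
Proof.
  induction n as [|n IHn]; intros H.
  - assert (H0 := H O (le_n 0)). rewrite sum_O. simpl INR in H0 |- *.
    rewrite Rdiv_0_l in H0 |- *. split; [exact H0 | reflexivity].
  - destruct IHn as [E1 E2]; [intros; apply H; lia|].
    assert (E3 := H (S n) (le_n _)). rewrite S_INR in E3 |- *.
    split; [exact (ex_RInt_Chasles f _ _ _ E1 E3)|].
    rewrite <- (RInt_Chasles f _ _ _ E1 E3), E2, sum_Sn, S_INR. reflexivity.
Qed.

Section Recursion.
Variable gamma : R.
Hypothesis hg : 0 < gamma < 1.

Definition quarter_factor (d : nat) : R := 1 + gamma * digit_val (Z.of_nat d).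

Lemma quarter_factor_pos d : 0 < quarter_factor d.
Proof.
  unfold quarter_factor.
  destruct (digit_val_cases (Z.of_nat d)) as [H|[H|H]]; rewrite H; lra.
Qed.

Definition I_trunc (m : nat) (t : R) : R :=
  RInt (fun y => Rmax t (vstar gamma m y)) 0 1.

Lemma Rmax_rescale c t V : 0 < c -> Rmax t (c * Rmax 1 V) = c * Rmax (Rmax (t / c) 1) V.
Proof.
  intros Hc. rewrite <- !RmaxRmult by lra.
  replace (c * (t / c)) with t by (field; lra). rewrite Rmult_1_r. apply Rmax_assoc.
Qed.

Lemma sixteenth_contribution m t d r : (r < 4)%nat ->
  (forall s, 1 <= s -> ex_RInt (fun y => Rmax s (vstar gamma m y)) 0 1) ->
  let p := INR (4 * d + r) in
  ex_RInt (fun x => Rmax t (vstar gamma (S m) x)) (p / 16) ((p + 1) / 16) /\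
  RInt (fun x => Rmax t (vstar gamma (S m) x)) (p / 16) ((p + 1) / 16)
  = quarter_factor d / 16 * I_trunc m (Rmax (t / quarter_factor d) 1).
Proof.
  intros Hr Hint p. apply RInt_affine_piece; [lra | apply Hint, Rmax_r |].
  intros x Hx. unfold p in Hx.
  rewrite (vstar_self_similar gamma hg m x (Z.of_nat (4 * d + r))),
          (rho1_on_sixteenth d r x Hr Hx), <- INR_IZR_INZ.
  apply Rmax_rescale, quarter_factor_pos.
Qed.

(* The recursion 4 I_{m+1}(t) = sum_{d<4} c_d I_m(max(t/c_d, 1)): sum the sixteen
   contributions, which only depend on the quarter d = p / 4. *)
Lemma I_trunc_recursion m t :
  (forall s, 1 <= s -> ex_RInt (fun y => Rmax s (vstar gamma m y)) 0 1) ->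
  ex_RInt (fun x => Rmax t (vstar gamma (S m) x)) 0 1 /\
  4 * I_trunc (S m) t =
    I_trunc m (Rmax t 1)
    + (1 + gamma) * I_trunc m (Rmax (t / (1 + gamma)) 1)
    + (1 - gamma) * I_trunc m (Rmax (t / (1 - gamma)) 1)
    + I_trunc m (Rmax t 1).
Proof.
  intros Hint.
  set (f := fun x => Rmax t (vstar gamma (S m) x)).
  assert (Hpiece : forall p, (p <= 15)%nat ->
    ex_RInt f (INR p / 16) ((INR p + 1) / 16) /\
    RInt f (INR p / 16) ((INR p + 1) / 16) =
      quarter_factor (p / 4) / 16 * I_trunc m (Rmax (t / quarter_factor (p / 4)) 1)).
  { intros p Hp.
    pose proof (sixteenth_contribution m t (p / 4) (p mod 4)
                  (Nat.mod_upper_bound p 4 ltac:(lia)) Hint) as H.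
    now rewrite <- Nat.div_mod_eq in H. }
  destruct (RInt_sum_pieces f 16 15) as [Hex Hsum]; [intros; apply Hpiece; lia|].
  assert (H1 : (INR 15 + 1) / 16 = 1) by (simpl; field).
  rewrite H1 in Hex, Hsum.
  split; [exact Hex|]. unfold I_trunc at 1. fold f. rewrite Hsum.
  rewrite (sum_n_ext_loc _ _ _ (fun p Hp => proj2 (Hpiece p Hp))).
  clear Hint Hpiece Hex Hsum H1.
  rewrite !sum_Sn, sum_O. unfold plus; simpl.
  repeat match goal with |- context[(?a / 4)%nat] =>
    let w := eval compute in (a / 4)%nat in change (a / 4)%nat with w end.
  unfold quarter_factor, digit_val; simpl.
  replace (t / (1 + gamma * 0)) with (t / 1) by (f_equal; ring).
  replace (t / (1 + gamma * 1)) with (t / (1 + gamma)) by (f_equal; ring).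
  replace (t / (1 + gamma * -1)) with (t / (1 - gamma)) by (f_equal; ring).
  rewrite Rdiv_1_r. lra.
Qed.
End Recursion.

(* ln u >= 1 - 1/u, strictly unless u = 1 (from exp y >= 1 + y at y = ln(1/u)). *)
Lemma ln_ge_one_minus_inv u : 0 < u -> 1 - / u <= ln u.
Proof.
  intros Hu. assert (H := exp_ineq1_le (ln (/ u))).
  rewrite exp_ln, ln_Rinv in H by (try apply Rinv_0_lt_compat; lra). lra.
Qed.

Lemma ln_gt_one_minus_inv u : 0 < u -> u <> 1 -> 1 - / u < ln u.
Proof.
  intros Hu H1. assert (Hne : ln (/ u) <> 0).
  { rewrite ln_Rinv by lra. intros H0. apply H1, ln_inv; [lra | lra |].
    rewrite ln_1. lra. }
  assert (H := exp_ineq1 (ln (/ u)) Hne).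
  rewrite exp_ln, ln_Rinv in H by (try apply Rinv_0_lt_compat; lra). lra.
Qed.

Definition alpha (gamma : R) : R := (gamma + (1 - gamma) * ln (1 - gamma)) / 4.

Lemma alpha_pos gamma : 0 < gamma < 1 -> 0 < alpha gamma.
Proof.
  intros hg. unfold alpha.
  assert (H := ln_gt_one_minus_inv (1 - gamma) ltac:(lra) ltac:(lra)).
  assert (H2 : (1 - gamma) * (1 - / (1 - gamma)) < (1 - gamma) * ln (1 - gamma))
    by (apply Rmult_lt_compat_l; lra).
  replace ((1 - gamma) * (1 - / (1 - gamma))) with (- gamma) in H2 by (field; lra).
  lra.
Qed.

Definition phi (u : R) : R := u - ln u.

Lemma phi_rescale c s : 0 < c -> 0 < s -> c * phi (s / c) = s - c * (ln s - ln c).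
Proof.
  intros Hc Hs. unfold phi, Rdiv.
  rewrite ln_mult, ln_Rinv by (try apply Rinv_0_lt_compat; lra). field. lra.
Qed.

(* One step of the recursion increases the bound phi s by alpha:
   the averaged bounds of the four quarters exceed phi s + alpha. *)
Lemma recursion_gain gamma s : 0 < gamma < 1 -> 1 <= s ->
  phi s + (1 + gamma) * phi (Rmax (s / (1 + gamma)) 1)
        + (1 - gamma) * phi (Rmax (s / (1 - gamma)) 1) + phi s
  >= 4 * (phi s + alpha gamma).
Proof.
  intros hg Hs. unfold alpha.
  rewrite (Rmax_left (s / (1 - gamma))), phi_rescale by
    (try apply Rle_div_r; lra).
  destruct (Rle_lt_dec (1 + gamma) s) as [Hbig | Hsmall].
  - (* both rescaled thresholds stay above 1: need (1+g) ln(1+g) >= g *)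
    rewrite Rmax_left, phi_rescale by (try apply Rle_div_r; lra).
    assert (L := ln_ge_one_minus_inv (1 + gamma) ltac:(lra)).
    assert (L2 : (1 + gamma) * (1 - / (1 + gamma)) <= (1 + gamma) * ln (1 + gamma))
      by (apply Rmult_le_compat_l; lra).
    replace ((1 + gamma) * (1 - / (1 + gamma))) with gamma in L2 by (field; lra).
    unfold phi. lra.
  - (* the (1+g)-quarter is truncated at 1: need (1+g) ln s >= s - 1 *)
    rewrite Rmax_right by (left; apply Rlt_div_l; lra).
    assert (L := ln_ge_one_minus_inv s ltac:(lra)).
    assert (L2 : (1 + gamma) * (1 - / s) <= (1 + gamma) * ln s)
      by (apply Rmult_le_compat_l; lra).
    assert (L3 : s - 1 <= (1 + gamma) * (1 - / s)).
    { replace ((1 + gamma) * (1 - / s)) with ((1 + gamma) * (s - 1) / s) by (field; lra).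
      apply Rle_div_r; nra. }
    unfold phi. rewrite ln_1. lra.
Qed.

Section Conclusion.
Variable gamma : R.
Hypothesis hg : 0 < gamma < 1.

Lemma I_trunc_lower_bound m : forall s, 1 <= s ->
  ex_RInt (fun y => Rmax s (vstar gamma m y)) 0 1 /\
  I_trunc gamma m s >= phi s + alpha gamma * INR m.
Proof.
  induction m as [|m IHm]; intros s Hs.
  - (* v*_0 = 0, so I_0(s) = s *)
    assert (Hconst : forall x, Rmin 0 1 < x < Rmax 0 1 -> s = Rmax s (vstar gamma 0 x)).
    { intros x _. simpl. rewrite Rmax_left; lra. }
    split; [exact (ex_RInt_ext _ _ 0 1 Hconst (ex_RInt_const 0 1 s))|].
    unfold I_trunc. rewrite <- (RInt_ext _ _ 0 1 Hconst), RInt_const.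
    assert (Hln : 0 <= ln s) by (rewrite <- ln_1; apply ln_le; lra).
    unfold scal; simpl; unfold mult; simpl. unfold phi. lra.
  - destruct (I_trunc_recursion gamma hg m s (fun s' Hs' => proj1 (IHm s' Hs')))
      as [Hex Hrec].
    split; [exact Hex|].
    assert (IH : forall c, 0 < c ->
      c * I_trunc gamma m (Rmax (s / c) 1)
      >= c * phi (Rmax (s / c) 1) + c * (alpha gamma * INR m)).
    { intros c Hc. destruct (IHm (Rmax (s / c) 1) (Rmax_r _ _)) as [_ H]. nra. }
    assert (K1 := IH (1 + gamma) ltac:(lra)). assert (K2 := IH (1 - gamma) ltac:(lra)).
    destruct (IHm s Hs) as [_ K0]. rewrite Rmax_left in Hrec by lra.
    assert (G := recursion_gain gamma s hg Hs).
    clear Hex IHm IH. rewrite S_INR. lra.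
Qed.

(* int_0^1 v*_{k+1} = I_k(1): the threshold 0 is invisible since v* >= 0, and
   becomes the threshold 1 in all four quarters. *)
Lemma integral_vstar_succ k :
  ex_RInt (vstar gamma (S k)) 0 1 /\ RInt (vstar gamma (S k)) 0 1 = I_trunc gamma k 1.
Proof.
  destruct (I_trunc_recursion gamma hg k 0
              (fun s Hs => proj1 (I_trunc_lower_bound k s Hs))) as [Hex Hrec].
  assert (Hpos : forall x, Rmin 0 1 < x < Rmax 0 1 ->
                   Rmax 0 (vstar gamma (S k) x) = vstar gamma (S k) x).
  { intros x _. apply Rmax_right, vstar_nonneg, hg. }
  split; [exact (ex_RInt_ext _ _ 0 1 Hpos Hex)|].
  rewrite <- (RInt_ext _ _ 0 1 Hpos). fold (I_trunc gamma (S k) 0).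
  assert (Hone : forall c, Rmax (0 / c) 1 = 1)
    by (intros c; rewrite Rdiv_0_l; apply Rmax_right; lra).
  rewrite !Hone, (Rmax_right 0 1) in Hrec by lra. clear Hex Hpos. lra.
Qed.

End Conclusion.

Theorem lemma7p2 (gamma : R) (hg : 0 < gamma < 1) :
  exists c : R, 0 < c /\
    forall m : nat, (1 <= m)%nat ->
      exists pr : Riemann_integrable (vstar gamma m) 0 1,
        RiemannInt pr >= c * INR m.
Proof.
  assert (Ha := alpha_pos gamma hg).
  exists (Rmin 1 (alpha gamma)). split; [apply Rmin_glb_lt; lra|].
  intros m Hm. destruct m as [|k]; [lia|].
  destruct (integral_vstar_succ gamma hg k) as [Hex Hint].
  exists (ex_RInt_Reals_0 _ _ _ Hex). rewrite <- RInt_Reals, Hint.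
  destruct (I_trunc_lower_bound gamma hg k 1 (Rle_refl 1)) as [_ Hbound].
  unfold phi in Hbound. rewrite ln_1 in Hbound.
  assert (Hk := pos_INR k). pose proof (Rmin_l 1 (alpha gamma)).
  assert (Rmin 1 (alpha gamma) * INR k <= alpha gamma * INR k)
    by (apply Rmult_le_compat_r; [exact Hk | apply Rmin_r]).
  clear Hex Hint. rewrite S_INR. lra.
Qed.
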